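(* For a permutation class $\mathcal{C}$ the following are equivalent: (a) $\mathcal{C}$ has unbounded horizontal path-width; (b) $\mathcal{C}$ contains horizontal alternations of arbitrarily large length; (c) $\mathcal{C}$ contains a horizontal monotone juxtaposition as a subclass.
   Context: Permutations of length $n$ are identified with their diagrams $\{(i,\pi_i)\}$; a permutation class is a set of permutations closed under containment (pattern containment: some subsequence in the same relative order). Intervalicity of $A\subseteq[n]$ is the least number of disjoint integer intervals with union $A$; the grid-complexity of a point set is the maximum of the intervalicities of its projections onto the two axes. The horizontal path-width of $\pi$ is the maximum over $i\in[n]$ of the grid-complexity of $\{(1,\pi_1),\dots,(i,\pi_i)\}$; a class has unbounded horizontal path-width if these values are unbounded over its members. A permutation $\pi$ is a horizontal alternation if there are no indices $i<j$ with $\pi_i$ odd and $\pi_j$ even (all even entries precede all odd entries). $\mathrm{Inc}$, $\mathrm{Dec}$ are the classes of increasing and decreasing permutations. A horizontal monotone juxtaposition is a grid class $\mathrm{Grid}(\mathcal{C}_1\ \mathcal{C}_2)$ of a $2\times1$ gridding matrix with $\mathcal{C}_1,\mathcal{C}_2\in\{\mathrm{Inc},\mathrm{Dec}\}$, i.e., the class of permutations $\pi$ of length $n$ for which there is $m\in\{0,\dots,n\}$ such that $\pi_1,\dots,\pi_m$ is a pattern in $\mathcal{C}_1$ and $\pi_{m+1},\dots,\pi_n$ is a pattern in $\mathcal{C}_2$. *)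

From mathcomp Require Import all_boot.
Set Implicit Arguments. Unset Strict Implicit. Unset Printing Implicit Defensive.

(* A permutation of length n is the sequence pi_1 ... pi_n of its values,
   a rearrangement of 1, ..., n. Its diagram is {(i, pi_i)}. *)
Definition is_perm (p : seq nat) : Prop := perm_eq p (iota 1 (size p)).

Definition order_iso (s t : seq nat) : Prop :=
  size s = size t /\
  forall i j, i < size s -> j < size s ->
    (nth 0 s i < nth 0 s j) = (nth 0 t i < nth 0 t j).

Definition contains (p q : seq nat) : Prop :=
  exists s, subseq s p /\ order_iso s q.

Definition perm_class (C : seq nat -> Prop) : Prop :=
  (forall p, C p -> is_perm p) /\
  (forall p q, C p -> is_perm q -> contains p q -> C q).

Definition in_interval (iv : nat * nat) (x : nat) : bool := (iv.1 <= x <= iv.2).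

Definition intervalicity_le (A : seq nat) (k : nat) : Prop :=
  exists I : seq (nat * nat),
    size I <= k /\
    (forall iv, iv \in I -> iv.1 <= iv.2) /\
    (forall i j x, i < size I -> j < size I -> i != j ->
        ~~ (in_interval (nth (0,0) I i) x && in_interval (nth (0,0) I j) x)) /\
    (forall x, (x \in A) = has (fun iv => in_interval iv x) I).

(* "grid-complexity of the point set {(i, p_i) : i <= m} is at most k":
   both projections have intervalicity at most k. *)
Definition prefix_gc_le (p : seq nat) (m k : nat) : Prop :=
  intervalicity_le (iota 1 m) k /\ intervalicity_le (take m p) k.

Definition hpw_le (p : seq nat) (k : nat) : Prop :=
  forall m, 1 <= m <= size p -> prefix_gc_le p m k.

Definition unbounded_hpw (C : seq nat -> Prop) : Prop :=
  forall k, exists p, C p /\ ~ hpw_le p k.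

Definition horizontal_alternation (p : seq nat) : Prop :=
  forall i j, i < j < size p -> ~~ (odd (nth 0 p i) && ~~ odd (nth 0 p j)).

Definition monotone (inc : bool) (s : seq nat) : bool :=
  if inc then sorted ltn s else sorted (fun x y => y < x) s.

Definition in_juxtaposition (c1 c2 : bool) (p : seq nat) : Prop :=
  is_perm p /\ exists m, m <= size p /\ monotone c1 (take m p) /\ monotone c2 (drop m p).

From mathcomp Require Import all_boot.
From mathcomp Require Import zify.
From Stdlib Require Import Classical.
Set Implicit Arguments. Unset Strict Implicit. Unset Printing Implicit Defensive.

(* We prove the cycle (a) -> (c) -> (b) -> (a).

   (a) -> (c). If a prefix take m p of a permutation has large intervalicity,
   its values split into many maximal runs; every run start t > 1 gives a
   "split pair": the value t lies in the prefix while t - 1 lies after it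
   (split_pairs p m T).  Two Erdos-Szekeres steps (erdos_szekeres) refine a
   large set T of split pairs to one whose tops, read in p, are monotone in
   some direction c1 and whose bottoms are monotone in some direction c2
   (split_pairs_monotone).  Since split pairs are pairwise separated by gaps
   of at least two, any juxtaposition of Grid(c1 c2) of size at most |T|
   embeds into p by sending its first part to tops and its second part to
   bottoms (split_pairs_embed).  As there are only four directions (c1, c2),
   one of them works for every size (bounded_choice).

   (c) -> (b). An even increasing/decreasing sequence followed by an odd one
   is an alternation in Grid(c1 c2) (juxtaposition_alternations).

   (b) -> (a). The even prefix of an alternation of length 2n contains n values,
   no two of them consecutive, so it needs n intervals (sparse_intervalicity). *)

Definition dir (c : bool) : rel nat := fun x y => if c then x < y else y < x.

Lemma monotoneE c s : monotone c s = sorted (dir c) s.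
Proof. by case: c. Qed.

Lemma dir_trans c : transitive (dir c).
Proof. by case: c => y x z /=; lia. Qed.

Lemma dir_irr c : irreflexive (dir c).
Proof. by case: c => x /=; rewrite ltnn. Qed.

Lemma sorted_subset_subseq c s1 s2 :
  sorted (dir c) s1 -> sorted (dir c) s2 -> {subset s1 <= s2} -> subseq s1 s2.
Proof.
move=> s1_sorted s2_sorted s12.
have -> : s1 = [seq x <- s2 | x \in s1].
  apply: (irr_sorted_eq (@dir_trans c) (@dir_irr c)) => //.
    exact: (sorted_filter (@dir_trans c)).
  by move=> x; rewrite mem_filter; case: (boolP (x \in s1)) => // /s12 ->.
exact: filter_subseq.
Qed.

Lemma sorted_dir_map c f s : {in s &, {homo f : u v / u < v}} ->
  sorted (dir c) s -> sorted (dir c) (map f s).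
Proof.
move=> f_homo; rewrite sorted_map; apply: (sub_in_sorted (P := mem s)); last exact/allP.
by case: c => u v us vs /=; apply: f_homo.
Qed.

Lemma filter_sorted_subset c (p t X : seq nat) : uniq p -> subseq t p ->
  sorted (dir c) t -> {subset X <= t} -> sorted (dir c) [seq x <- p | x \in X].
Proof.
move=> p_uniq t_sub t_sorted Xt.
have -> : [seq x <- p | x \in X] = [seq x <- t | x \in X].
  rewrite [in RHS](subseq_uniqP p_uniq t_sub) -filter_predI.
  by apply: eq_filter => x /=; case: (boolP (x \in X)) => // /Xt ->.
exact: (sorted_filter (@dir_trans c)).
Qed.

(* Induction on n true + n false: the first entry x is followed
   by at least 2 ^ (N - 1) entries on one side c of x, which may be prefixed by x. *)
Lemma erdos_szekeres (n : bool -> nat) (s : seq nat) : uniq s ->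
  2 ^ (n true + n false) <= size s ->
  exists c t, [/\ subseq t s, n c <= size t & sorted (dir c) t].
Proof.
move: {2}(n true + n false) (leqnn (n true + n false)) => k.
elim: k n s => [|k IH] n s n_bound s_uniq s_large.
  by exists true, [::]; rewrite sub0seq; split => //; lia.
case: (pickP (fun c => n c == 0)) => [c /eqP nc0 | n_pos].
  by exists c, [::]; rewrite sub0seq nc0.
have {}n_pos c : 0 < n c by have := n_pos c; rewrite /= lt0n => ->.
case: s s_uniq s_large => [|x s'] /=; first by rewrite leqNgt expn_gt0.
move=> /andP [x_notin s'_uniq] s_large.
pose L c := [seq y <- s' | dir c x y].
have L_split : size (L true) + size (L false) = size s'.
  rewrite !size_filter -(count_predC (dir true x) s'); congr (_ + _).
  apply: eq_in_count => y ys /=.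
  have : y != x by apply: contraNneq x_notin => <-.
  lia.
set N := n true + n false in n_bound s_large.
have pow_half : 2 ^ N = (2 ^ N.-1).*2.
  by rewrite -muln2 -expnSr prednK // /N; have := n_pos true; lia.
have [c L_large] : exists c, 2 ^ N.-1 <= size (L c).
  case: (leqP (2 ^ N.-1) (size (L true))) => h; first by exists true.
  by exists false; lia.
pose n' d := if d == c then (n d).-1 else n d.
have n'_sum : n' true + n' false = N.-1.
  by rewrite /n' /N; have := n_pos true; have := n_pos false; case: (c) => /=; lia.
have [c' [t [t_sub t_size t_sorted]]] :
    exists c' t, [/\ subseq t (L c), n' c' <= size t & sorted (dir c') t].
  by apply: IH; rewrite ?n'_sum ?filter_uniq //; lia.
have t_sub_s' : subseq t s' := subseq_trans t_sub (filter_subseq _ _).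
have [ec | neq] := eqVneq c' c.
  subst c'.
  exists c, (x :: t); split => /=.
  - by rewrite eqxx t_sub_s'.
  - by move: t_size; rewrite /n' eqxx -(prednK (n_pos c)) ltnS.
  rewrite (path_sortedE (@dir_trans c)) t_sorted andbT.
  by apply/allP => y /(mem_subseq t_sub); rewrite mem_filter => /andP [].
exists c', t; split => //; first exact: subseq_trans t_sub_s' (subseq_cons s' x).
by move: t_size; rewrite /n' (negbTE neq).
Qed.

Lemma is_perm_uniq p : is_perm p -> uniq p.
Proof. by move=> hp; rewrite (perm_uniq hp) iota_uniq. Qed.

Lemma is_perm_mem p x : is_perm p -> (x \in p) = (0 < x <= size p).
Proof. by move=> hp; rewrite (perm_mem hp) mem_iota; lia. Qed.

Lemma class_embed C p q f : perm_class C -> C p -> is_perm q ->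
  {in q &, {mono f : u v / u < v}} -> subseq (map f q) p -> C q.
Proof.
move=> [_ closed] Cp q_perm f_mono q_sub; apply: (closed p q Cp q_perm).
exists (map f q); split=> //; split; first by rewrite size_map.
move=> i j; rewrite size_map => hi hj; rewrite !(nth_map 0) //.
by apply: f_mono; exact: mem_nth.
Qed.

Lemma intervalicity_iota m k : 0 < m -> 0 < k -> intervalicity_le (iota 1 m) k.
Proof.
move=> m_pos k_pos; exists [:: (1, m)]; split=> //; split.
  by move=> iv; rewrite inE => /eqP -> /=.
split; first by move=> [|i] [|j].
by move=> x; rewrite mem_iota /= /in_interval /= orbF; lia.
Qed.

(* A set without two consecutive elements has intervalicity equal to its size:
   each interval contains at most one of its elements. *)
Lemma sparse_intervalicity A k : uniq A -> {in A, forall x, x.+1 \notin A} ->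
  intervalicity_le A k -> size A <= k.
Proof.
move=> A_uniq A_sparse [I [I_size [_ [_ A_cover]]]].
pose idx x := find (fun iv => in_interval iv x) I.
have idxP x : x \in A -> idx x < size I /\ in_interval (nth (0, 0) I (idx x)) x.
  by rewrite A_cover => hx; rewrite -has_find; split=> //; exact (nth_find (0, 0) hx).
have idx_sep x y : x \in A -> y \in A -> idx x = idx y -> x < y -> False.
  move=> hx hy e xy; have [hlt ivx] := idxP _ hx; have [_ ivy] := idxP _ hy.
  have : x.+1 \in A.
    rewrite A_cover; apply/hasP; exists (nth (0, 0) I (idx x)); first exact: mem_nth.
    by move: ivx ivy; rewrite -e /in_interval; case: nth => a b /=; lia.
  by rewrite (negbTE (A_sparse _ hx)).
apply: leq_trans I_size; rewrite -(size_map idx) -(size_iota 0 (size I)).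
apply: uniq_leq_size.
  rewrite map_inj_in_uniq // => x y hx hy e.
  by case: (ltngtP x y) => // [/(idx_sep _ _ hx hy e) | /(idx_sep _ _ hy hx (esym e))].
by move=> _ /mapP [x hx ->]; rewrite mem_iota; have [] := idxP _ hx.
Qed.

(* Upper bound on intervalicity: the maximal runs of a set A of positive
   integers, one per run start (an element s with s - 1 \notin A), cover A
   by disjoint intervals [s, run_end s]. *)
Section Runs.
Variable A : seq nat.
Hypothesis A_pos : 0 \notin A.

Definition run_starts := [seq x <- undup A | x.-1 \notin A].

(* Every run ends, e.g. below the maximum of A. *)
Lemma run_exit s : exists d, s + d.+1 \notin A.
Proof.
have A_bound x : x \in A -> x <= \max_(y <- A) y.
  by move=> hx; exact: (leq_bigmax_seq (F := id) (P := predT) x hx).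
exists (\max_(y <- A) y); apply/negP => /A_bound; lia.
Qed.

Definition run_end s := s + ex_minn (run_exit s).

Lemma run_end_in s x : s \in A -> s <= x <= run_end s -> x \in A.
Proof.
rewrite /run_end; case: ex_minnP => d _ d_min s_in /andP [sx xe].
have [<- // | s_ne_x] := eqVneq s x.
have -> : x = s + (x - s).-1.+1 by lia.
apply: contraLR isT => /d_min; lia.
Qed.

Lemma run_end_out s : (run_end s).+1 \notin A.
Proof. by rewrite /run_end; case: ex_minnP => d d_out _; rewrite -addnS. Qed.

Lemma run_start_of x : x \in A -> exists2 s, s \in run_starts & s <= x <= run_end s.
Proof.
move=> x_in.
have [s s_start [sx sxA]] : exists2 s, s \in run_starts &
    s <= x /\ forall y, s <= y <= x -> y \in A.
  elim: x x_in => [|x IH] x_in; first by move: A_pos; rewrite x_in.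
  have [x_in' | x_out] := boolP (x \in A).
    have [s s_start [sx sxA]] := IH x_in'; exists s => //; split=> [|y]; first lia.
    by have [-> // | ? ?] := eqVneq y x.+1; apply: sxA; lia.
  exists x.+1; first by rewrite mem_filter mem_undup x_in x_out.
  by split=> // y ?; have -> : y = x.+1 by lia.
exists s => //; rewrite sx leqNgt; apply/negP => ex.
have : (run_end s).+1 \in A by apply: sxA; rewrite /run_end in ex *; lia.
by rewrite (negbTE (run_end_out s)).
Qed.

Lemma run_starts_disjoint a b x : a \in run_starts -> b \in run_starts -> a < b ->
  a <= x <= run_end a -> b <= x -> False.
Proof.
rewrite !mem_filter !mem_undup => /andP [_ a_in] /andP [b_out _] ab xa bx.
by move: b_out; rewrite (run_end_in a_in) //; lia.
Qed.

Lemma runs_intervalicity k : size run_starts <= k -> intervalicity_le A k.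
Proof.
move=> starts_size; exists [seq (s, run_end s) | s <- run_starts]; rewrite size_map.
split=> //; split; first by move=> _ /mapP [s _ ->]; rewrite /= leq_addr.
split.
  move=> i j x hi hj ij; rewrite !(nth_map 0) // /in_interval /=.
  have si := mem_nth 0 hi; have sj := mem_nth 0 hj.
  have : nth 0 run_starts i != nth 0 run_starts j.
    by rewrite nth_uniq // filter_uniq // undup_uniq.
  apply: contra => /andP [/andP [ix xi] /andP [jx xj]].
  case: ltngtP => // [lt | lt].
  - by exfalso; apply: (run_starts_disjoint si sj lt (x := x)); rewrite ?ix ?xi ?jx.
  - by exfalso; apply: (run_starts_disjoint sj si lt (x := x)); rewrite ?jx ?xj ?ix.
move=> x; apply/idP/hasP => [/run_start_of [s s_start sx] | [_ /mapP [s s_start ->] sx]].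
  by exists (s, run_end s); first exact: map_f.
by move: s_start; rewrite mem_filter mem_undup => /andP [_ /run_end_in]; apply.
Qed.

End Runs.

Lemma gapped_shift_homo (K : seq nat) (P : pred nat) :
  (forall i i', i < i' < size K -> (nth 0 K i).+1 < nth 0 K i') ->
  {in [pred v | 0 < v <= size K] &,
    {homo (fun v => if P v then nth 0 K v.-1 else (nth 0 K v.-1).-1) : u v / u < v}}.
Proof.
move=> K_gap u v; rewrite !inE => /andP [u_pos _] /andP [_ vK] uv.
by have := K_gap u.-1 v.-1; case: (P u); case: (P v); lia.
Qed.

Definition split_pairs (p : seq nat) (m : nat) (T : seq nat) : Prop :=
  {in T, forall t, t \in take m p /\ t.-1 \in drop m p}.

Lemma take_drop_disjoint (p : seq nat) m x : uniq p ->
  x \in take m p -> x \in drop m p -> False.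
Proof.
rewrite -{1}(cat_take_drop m p) cat_uniq => /and3P [_ /hasP disj _] xt xd.
by apply: disj; exists x.
Qed.

Section SplitPairs.
Variables (p : seq nat) (m : nat) (T : seq nat).
Hypotheses (p_uniq : uniq p) (T_split : split_pairs p m T).

(* Tops are positive, and no top is the bottom of another: distinct tops
   differ by at least two. *)
Lemma split_pairs_pos t : t \in T -> 0 < t.
Proof.
move=> tT; have [tt td] := T_split tT; rewrite lt0n; apply/eqP => t0.
by move: tt td; rewrite t0 => /(take_drop_disjoint p_uniq).
Qed.

Lemma split_pairs_gap a b : a \in T -> b \in T -> a < b -> a.+1 < b.
Proof.
move=> aT bT ab; rewrite ltn_neqAle ab andbT; apply/eqP => ab1.
have [a_top _] := T_split aT; have [_ b_bot] := T_split bT.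
by move: b_bot; rewrite -ab1 /= => /(take_drop_disjoint p_uniq a_top).
Qed.

Lemma split_pairs_subseq :
  subseq ([seq x <- p | x \in T] ++ [seq x <- p | x.+1 \in T]) p.
Proof.
have filter_none (s : seq nat) (P : pred nat) :
    {in s, forall x, ~~ P x} -> [seq x <- s | P x] = [::].
  by move=> none; rewrite (eq_in_filter (a2 := pred0)) ?filter_pred0 // => x /none /negbTE.
have tops_none : [seq x <- drop m p | x \in T] = [::].
  apply: filter_none => x xd; apply/negP => /T_split [xt _].
  exact: take_drop_disjoint p_uniq xt xd.
have bottoms_none : [seq x <- take m p | x.+1 \in T] = [::].
  apply: filter_none => x xt; apply/negP => /T_split [_ xd].
  exact: take_drop_disjoint p_uniq xt xd.
rewrite -{1 2}(cat_take_drop m p) !filter_cat tops_none bottoms_none cats0 /=.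
by rewrite -{3}(cat_take_drop m p) cat_subseq ?filter_subseq.
Qed.

Lemma split_pairs_sort_gap : uniq T -> forall i i', i < i' < size (sort leq T) ->
  (nth 0 (sort leq T) i).+1 < nth 0 (sort leq T) i'.
Proof.
move=> T_uniq i i' /andP [ii' i'K].
have gap_trans : transitive (fun a b => a.+1 < b) by move=> b a c /=; lia.
have gap_sorted : sorted (fun a b => a.+1 < b) (sort leq T).
  apply: (sub_in_sorted (P := mem T) (e := ltn)).
  - by move=> a b aT bT /=; apply: split_pairs_gap.
  - by apply/allP => x; rewrite mem_sort.
  by rewrite ltn_sorted_uniq_leq sort_uniq T_uniq sort_sorted //; exact: leq_total.
by apply: (sorted_ltn_nth gap_trans 0 gap_sorted); rewrite ?inE ?(ltn_trans ii' i'K).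
Qed.

(* Value v of q goes to the v-th smallest top if v lies in the first
   part of q, and to the bottom just below it otherwise; the gaps between tops
   make this relabelling order-preserving. *)
Lemma split_pairs_embed C c1 c2 q : perm_class C -> C p -> uniq T ->
  sorted (dir c1) [seq x <- p | x \in T] ->
  sorted (dir c2) [seq x <- p | x.+1 \in T] ->
  in_juxtaposition c1 c2 q -> size q <= size T -> C q.
Proof.
move=> HC Cp T_uniq tops_sorted bottoms_sorted [q_perm [j [_ [q1 q2]]]] q_size.
rewrite monotoneE in q1; rewrite monotoneE in q2.
pose K := sort leq T.
have q_range : {subset q <= [pred v | 0 < v <= size K]}.
  by move=> v; rewrite (is_perm_mem _ q_perm) inE size_sort; lia.
have K_T v : v \in q -> nth 0 K v.-1 \in T.
  by move=> /q_range; rewrite inE => /andP [v_pos vK]; rewrite -(mem_sort leq) mem_nth // prednK.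
pose f v := if v \in take j q then nth 0 K v.-1 else (nth 0 K v.-1).-1.
have f_homo : {in q &, {homo f : u v / u < v}}.
  move=> u v /q_range u_range /q_range v_range.
  exact: (gapped_shift_homo _ (split_pairs_sort_gap T_uniq) u_range v_range).
have top_part : subseq (map f (take j q)) [seq x <- p | x \in T].
  apply: (sorted_subset_subseq _ tops_sorted).
    by apply: sorted_dir_map q1; apply: sub_in2 f_homo => v /mem_take.
  move=> _ /mapP [v vt ->]; rewrite /f vt mem_filter K_T ?(mem_take vt) //=.
  by have [/mem_take] := T_split (K_T _ (mem_take vt)).
have bottom_part : subseq (map f (drop j q)) [seq x <- p | x.+1 \in T].
  apply: (sorted_subset_subseq _ bottoms_sorted).
    by apply: sorted_dir_map q2; apply: sub_in2 f_homo => v /mem_drop.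
  move=> _ /mapP [v vd ->]; have vq := mem_drop vd.
  have -> : f v = (nth 0 K v.-1).-1.
    rewrite /f; case: ifPn => // vt.
    by case: (take_drop_disjoint (is_perm_uniq q_perm) vt vd).
  rewrite mem_filter prednK ?K_T ?(split_pairs_pos (K_T _ vq)) //=.
  by have [_ /mem_drop] := T_split (K_T _ vq).
apply: (class_embed HC Cp q_perm (f := f)).
  by apply: leqW_mono_in; apply: leq_mono_in.
rewrite -(cat_take_drop j q) map_cat.
exact: subseq_trans (cat_subseq top_part bottom_part) split_pairs_subseq.
Qed.

End SplitPairs.

(* Ramsey step: two applications of Erdos-Szekeres, to the tops of T and then
   to the bottoms of the surviving tops, yield M split pairs with monotone
   tops and monotone bottoms. *)
Lemma split_pairs_monotone p m T M : uniq p -> split_pairs p m T -> uniq T ->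
  2 ^ (2 ^ (M + M) + 2 ^ (M + M)) <= size T ->
  exists c1 c2 T', [/\ uniq T', split_pairs p m T', M <= size T',
    sorted (dir c1) [seq x <- p | x \in T'] & sorted (dir c2) [seq x <- p | x.+1 \in T']].
Proof.
move=> p_uniq T_split T_uniq T_size; set M1 := 2 ^ (M + M) in T_size.
have T_pos := split_pairs_pos p_uniq T_split.
have tops_size : 2 ^ (M1 + M1) <= size [seq x <- p | x \in T].
  rewrite (perm_size (uniq_perm (filter_uniq _ p_uniq) T_uniq _)) // => x.
  by rewrite mem_filter; case: (boolP (x \in T)) => // /T_split [/mem_take ->].
have [c1 [t1 [t1_sub t1_size t1_sorted]]] :=
  erdos_szekeres (n := fun=> M1) (filter_uniq _ p_uniq) tops_size.
have t1_p : subseq t1 p := subseq_trans t1_sub (filter_subseq _ _).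
have t1_T : {subset t1 <= T} by move=> x /(mem_subseq t1_sub); rewrite mem_filter => /andP [].
have bottoms_size : M1 <= size [seq x <- p | x.+1 \in t1].
  apply: (leq_trans t1_size); rewrite -(size_map predn t1); apply: uniq_leq_size.
    rewrite map_inj_in_uniq ?(subseq_uniq t1_p p_uniq) // => a b /t1_T/T_pos a_pos /t1_T/T_pos.
    lia.
  move=> _ /mapP [t tt1 ->]; rewrite mem_filter prednK ?T_pos ?t1_T ?tt1 //=.
  by have [_ /mem_drop] := T_split _ (t1_T _ tt1).
have [c2 [t2 [t2_sub t2_size t2_sorted]]] :=
  erdos_szekeres (n := fun=> M) (filter_uniq _ p_uniq) bottoms_size.
have t2_p : subseq t2 p := subseq_trans t2_sub (filter_subseq _ _).
have t2_t1 : {subset map S t2 <= t1}.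
  move=> x /mapP [o /(mem_subseq t2_sub) o_in ->].
  by move: o_in; rewrite mem_filter => /andP [].
exists c1, c2, (map S t2); split.
- by rewrite (map_inj_uniq succn_inj) (subseq_uniq t2_p p_uniq).
- by move=> t /t2_t1 /t1_T /T_split.
- by rewrite size_map.
- exact: filter_sorted_subset p_uniq t1_p t1_sorted t2_t1.
rewrite (eq_filter (a2 := mem t2)) => [|x]; last by rewrite /= (mem_map succn_inj).
exact: filter_sorted_subset p_uniq t2_p t2_sorted (fun x h => h).
Qed.

(* A permutation of unbounded horizontal path-width has many split pairs:
   the run starts t > 1 of a prefix of large intervalicity. *)
Lemma unbounded_split_pairs C : perm_class C -> unbounded_hpw C ->
  forall n, exists p m T, [/\ C p, uniq T, split_pairs p m T & n <= size T].
Proof.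
move=> [C_perm _] unbounded n; have [p [Cp not_hpw]] := unbounded n.+1.
have p_perm := C_perm _ Cp.
have [m bad_m] : exists m, ~ (1 <= m <= size p -> prefix_gc_le p m n.+1).
  exact: not_all_ex_not.
have [m_range not_gc] := imply_to_and _ _ bad_m.
set A := take m p; set S := run_starts A.
have A_pos : 0 \notin A by apply/negP => /mem_take; rewrite (is_perm_mem _ p_perm).
have S_size : n.+1 < size S.
  rewrite ltnNge; apply/negP => small; apply: not_gc; split.
    by apply: intervalicity_iota; lia.
  exact: runs_intervalicity.
have S_uniq : uniq S by rewrite filter_uniq // undup_uniq.
exists p, m, [seq t <- S | t != 1]; split=> //; first exact: filter_uniq.
  move=> t; rewrite !mem_filter mem_undup => /and3P [t_ne1 t_out t_in]; split=> //.
  have t_pos : 1 < t.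
    by case: t t_ne1 t_in {t_out} => [|[|t]] // _ t0; rewrite t0 in A_pos.
  have : t.-1 \in p.
    by rewrite (is_perm_mem _ p_perm); move: (mem_take t_in); rewrite (is_perm_mem _ p_perm); lia.
  by rewrite -{1}(cat_take_drop m p) mem_cat (negbTE t_out).
have ones : count_mem 1 S <= 1 by rewrite count_uniq_mem // leq_b1.
rewrite size_filter (@eq_count _ _ (predC (pred1 1))) //.
by move: S_size ones; rewrite -(count_predC (pred1 1) S); lia.
Qed.

Lemma bounded_choice (P : bool -> bool -> seq nat -> Prop) (C : seq nat -> Prop) :
  (forall M, exists c1 c2, forall q, P c1 c2 q -> size q <= M -> C q) ->
  exists c1 c2, forall q, P c1 c2 q -> C q.
Proof.
move=> bounded; apply: NNPP => none.
have witness c1 c2 : exists q, P c1 c2 q /\ ~ C q.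
  apply: NNPP => no_witness; apply: none; exists c1, c2 => q Pq.
  by apply: NNPP => nCq; apply: no_witness; exists q.
have [q1 [P1 nC1]] := witness true true; have [q2 [P2 nC2]] := witness true false.
have [q3 [P3 nC3]] := witness false true; have [q4 [P4 nC4]] := witness false false.
have [c1 [c2 all_small]] := bounded (size q1 + size q2 + size q3 + size q4).
case: c1 c2 all_small => -[] all_small.
- by apply: nC1; apply: all_small => //; lia.
- by apply: nC2; apply: all_small => //; lia.
- by apply: nC3; apply: all_small => //; lia.
- by apply: nC4; apply: all_small => //; lia.
Qed.

Lemma unbounded_juxtaposition C : perm_class C -> unbounded_hpw C ->
  exists c1 c2, forall q, in_juxtaposition c1 c2 q -> C q.
Proof.
move=> HC unbounded; apply: bounded_choice => M.
have [p [m [T [Cp T_uniq T_split T_size]]]] :=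
  unbounded_split_pairs HC unbounded (2 ^ (2 ^ (M + M) + 2 ^ (M + M))).
have p_uniq := is_perm_uniq (proj1 HC _ Cp).
have [c1 [c2 [T' [T'_uniq T'_split T'_size tops bottoms]]]] :=
  split_pairs_monotone p_uniq T_split T_uniq T_size.
exists c1, c2 => q q_jux q_size.
apply: (split_pairs_embed p_uniq T'_split HC Cp T'_uniq tops bottoms q_jux).
exact: leq_trans q_size T'_size.
Qed.

Lemma alternation_cat l1 l2 : all (fun x => ~~ odd x) l1 -> all odd l2 ->
  horizontal_alternation (l1 ++ l2).
Proof.
move=> /(all_nthP 0) l1_even /(all_nthP 0) l2_odd i j /andP [ij]; rewrite size_cat => j_size.
rewrite !nth_cat; case: ltnP => i1; first by rewrite (negbTE (l1_even _ i1)).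
by rewrite ltnNge (leq_trans i1 (ltnW ij)) /= (l2_odd (j - size l1)) ?andbF //; lia.
Qed.

Lemma take_find_even p : all (fun x => ~~ odd x) (take (find odd p) p).
Proof.
apply/(all_nthP 0) => i; rewrite size_take_min => i_lt.
by rewrite nth_take ?(before_find _ (leq_trans i_lt (geq_minl _ _))) //; lia.
Qed.

Lemma alternation_drop_odd p : horizontal_alternation p -> all odd (drop (find odd p) p).
Proof.
move=> alt; apply/(all_nthP 0) => i; rewrite size_drop nth_drop => i_lt.
have p_odd : has odd p by rewrite has_find; lia.
case: i i_lt => [|i] i_lt; first by rewrite addn0 nth_find.
have := alt (find odd p) (find odd p + i.+1).
by rewrite nth_find //= negbK; apply; lia.
Qed.

Lemma alternation_prefix_size p : is_perm p -> horizontal_alternation p ->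
  (size p)./2 <= size (take (find odd p) p).
Proof.
move=> p_perm alt; rewrite -(size_iota 1 (size p)./2) -(size_map double).
apply: uniq_leq_size; first by rewrite (map_inj_uniq double_inj) iota_uniq.
move=> x /mapP [i]; rewrite mem_iota => i_range ->.
have : i.*2 \in p.
  by rewrite (is_perm_mem _ p_perm) -!muln2; have := leq_half_double (size p); lia.
rewrite -{1}(cat_take_drop (find odd p) p) mem_cat => /orP [//|i_drop].
by have := allP (alternation_drop_odd alt) _ i_drop; rewrite odd_double.
Qed.

Lemma alternations_unbounded C : perm_class C ->
  (forall N, exists p, C p /\ N <= size p /\ horizontal_alternation p) -> unbounded_hpw C.
Proof.
move=> [C_perm _] alternations k; have [p [Cp [p_size alt]]] := alternations (k.+1).*2.
exists p; split=> // hpw; set A := take (find odd p) p.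
have A_size : k < size A.
  have := alternation_prefix_size (C_perm _ Cp) alt; rewrite -/A.
  by move: p_size; have := leq_half_double (size p); rewrite -!muln2; lia.
have [_ A_int] : prefix_gc_le p (find odd p) k.
  by apply: hpw; rewrite find_size andbT; move: A_size; rewrite size_take_min; lia.
have A_sparse : {in A, forall x, x.+1 \notin A}.
  move=> x xA; apply/negP => /(allP (take_find_even p)); rewrite /=.
  by have := allP (take_find_even p) _ xA; rewrite /= => /negbTE ->.
have := sparse_intervalicity (take_uniq _ (is_perm_uniq (C_perm _ Cp))) A_sparse A_int.
by rewrite leqNgt A_size.
Qed.

(* The alternation 2 4 ... 2N 1 3 ... 2N-1, with each half oriented in the
   direction of the corresponding cell of the juxtaposition. *)
Definition evens N := [seq i.*2 | i <- iota 1 N].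
Definition odds N := [seq i.*2.+1 | i <- iota 0 N].
Definition orient (c : bool) (s : seq nat) := if c then s else rev s.

Lemma evens_odds_perm N : perm_eq (evens N ++ odds N) (iota 1 N.*2).
Proof.
have iotaS m n : iota m n.+1 = iota m n ++ [:: m + n] by rewrite -addn1 iotaD.
elim: N => // N IH.
rewrite /evens /odds doubleS !iotaS !map_cat -/(evens N) -/(odds N).
rewrite perm_catACA -[X in perm_eq _ X]catA; apply: perm_cat IH _.
by rewrite perm_catC /= add1n add0n doubleS.
Qed.

Lemma perm_orient c s : perm_eq (orient c s) s.
Proof. by case: c; rewrite /= ?perm_rev. Qed.

Lemma orient_all a c s : all a (orient c s) = all a s.
Proof. by case: c; rewrite /= ?all_rev. Qed.

Lemma orient_monotone c s : sorted ltn s -> monotone c (orient c s).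
Proof. by case: c => //= s_sorted; rewrite rev_sorted. Qed.

Lemma juxtaposition_alternations C c1 c2 :
  (forall p, in_juxtaposition c1 c2 p -> C p) ->
  forall N, exists p, C p /\ N <= size p /\ horizontal_alternation p.
Proof.
move=> juxtaposed N; pose E := orient c1 (evens N); pose O := orient c2 (odds N).
have orient_size c s : size (orient c s) = size s by case: c; rewrite ?size_rev.
have E_size : size E = N by rewrite orient_size size_map size_iota.
have O_size : size O = N by rewrite orient_size size_map size_iota.
exists (E ++ O); split; last split.
- apply: juxtaposed; split.
    rewrite /is_perm size_cat E_size O_size addnn; apply: (perm_trans _ (evens_odds_perm N)).
    by rewrite perm_cat ?perm_orient.
  exists N; rewrite size_cat E_size leq_addr take_size_cat ?drop_size_cat //.
  by split=> //; split; apply: orient_monotone; rewrite sorted_map;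
    apply: sub_sorted (iota_ltn_sorted _ _) => a b /=; rewrite ?ltnS ltn_double.
- by rewrite size_cat E_size leq_addr.
apply: alternation_cat; rewrite /E /O orient_all;
  by apply/allP => x /mapP [i _ ->]; rewrite /= odd_double.
Qed.

Theorem mainTheorem9 (C : seq nat -> Prop) (HC : perm_class C) :
  (unbounded_hpw C <->
     (forall N, exists p, C p /\ N <= size p /\ horizontal_alternation p)) /\
  (unbounded_hpw C <->
     exists c1 c2 : bool, forall p, in_juxtaposition c1 c2 p -> C p).
Proof.
have a_to_c := unbounded_juxtaposition HC.
have c_to_b : (exists c1 c2, forall p, in_juxtaposition c1 c2 p -> C p) ->
    forall N, exists p, C p /\ N <= size p /\ horizontal_alternation p.
  by move=> [c1 [c2 /juxtaposition_alternations]].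
have b_to_a := alternations_unbounded HC.
split; split.
- by move/a_to_c/c_to_b.
- exact: b_to_a.
- exact: a_to_c.
- by move/c_to_b/b_to_a.
Qed.
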